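(* Let $\mathcal{C}$ and $\mathcal{D}$ be linear categories over a field $k$, and let $F: \mathcal{C} \leftrightarrows \mathcal{D}: U$ be an adjunction ($F$ left adjoint to $U$) in which $F$ and $U$ are linear functors and $U$ is exact and faithful. If $\mathcal{C}$ is a finite linear category, then $\mathcal{D}$ is also a finite linear category.
   Context: Fix a field $k$. A linear category is an abelian category together with a compatible enrichment over the category of (possibly infinite-dimensional) $k$-vector spaces; a linear functor is an additive functor that is also $k$-linear on morphism spaces. A linear category is finite if (1) all morphism spaces are finite-dimensional, (2) every object has finite length (every strictly decreasing chain of subobjects is finite), (3) it has enough projectives (every object is a quotient of a projective object), and (4) it has finitely many isomorphism classes of simple objects. *)

From HB Require Import structures.
From mathcomp Require Import all_boot all_algebra.
Set Implicit Arguments. Unset Strict Implicit. Unset Printing Implicit Defensive.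
Import GRing.Theory.
Local Open Scope ring_scope.

Record LinCat (k : fieldType) := {
  ob :> Type;
  hom : ob -> ob -> lmodType k;
  idm : forall a, hom a a;
  comp : forall a b c, hom b c -> hom a b -> hom a c;
  comp_assoc : forall a b c d (h : hom c d) (g : hom b c) (f : hom a b),
      comp h (comp g f) = comp (comp h g) f;
  comp_id_l : forall a b (f : hom a b), comp (idm b) f = f;
  comp_id_r : forall a b (f : hom a b), comp f (idm a) = f;
  comp_linear_r : forall a b c (g : hom b c) (x : k) (f1 f2 : hom a b),
      comp g (x *: f1 + f2) = x *: comp g f1 + comp g f2;
  comp_linear_l : forall a b c (f : hom a b) (x : k) (g1 g2 : hom b c),
      comp (x *: g1 + g2) f = x *: comp g1 f + comp g2 f
}.
Arguments hom {k} C a b : rename.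
Arguments idm {k C} a : rename.
Arguments comp {k C a b c} g f : rename.

Section CatDefs.
Variables (k : fieldType) (C : LinCat k).

Definition mono (a b : C) (f : hom C a b) : Prop :=
  forall x (g h : hom C x a), comp f g = comp f h -> g = h.
Definition epi (a b : C) (f : hom C a b) : Prop :=
  forall x (g h : hom C b x), comp g f = comp h f -> g = h.
Definition iso (a b : C) (f : hom C a b) : Prop :=
  exists g : hom C b a, comp g f = idm a /\ comp f g = idm b.
Definition isomorphic (a b : C) : Prop := exists f : hom C a b, iso f.

Definition is_zero_obj (z : C) : Prop := idm z = 0.

Definition is_kernel (a b K : C) (f : hom C a b) (i : hom C K a) : Prop :=
  comp f i = 0 /\
  forall x (g : hom C x a), comp f g = 0 ->
    exists h : hom C x K, comp i h = g /\ forall h', comp i h' = g -> h' = h.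
Definition is_cokernel (a b Q : C) (f : hom C a b) (p : hom C b Q) : Prop :=
  comp p f = 0 /\
  forall x (g : hom C b x), comp g f = 0 ->
    exists h : hom C Q x, comp h p = g /\ forall h', comp h' p = g -> h' = h.
Definition is_product (a b P : C) (p1 : hom C P a) (p2 : hom C P b) : Prop :=
  forall x (f : hom C x a) (g : hom C x b),
    exists h : hom C x P, [/\ comp p1 h = f, comp p2 h = g &
       forall h', comp p1 h' = f -> comp p2 h' = g -> h' = h].

(* Abelian category (Freyd's definition, for a preadditive category):
   zero object, binary products, kernels, cokernels, every mono is a kernel
   and every epi is a cokernel. *)
Definition is_abelian : Prop :=
  (exists z : C, is_zero_obj z) /\
  (forall a b : C, exists P (p1 : hom C P a) (p2 : hom C P b), is_product p1 p2) /\
  (forall (a b : C) (f : hom C a b), exists K (i : hom C K a), is_kernel f i) /\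
  (forall (a b : C) (f : hom C a b), exists Q (p : hom C b Q), is_cokernel f p) /\
  (forall (a b : C) (m : hom C a b), mono m ->
        exists c (f : hom C b c), is_kernel f m) /\
  (forall (a b : C) (e : hom C a b), epi e ->
        exists c (f : hom C c a), is_cokernel f e).

Definition linear_category : Prop := is_abelian.

Definition findim_homs : Prop :=
  forall a b : C, exists n (v : 'I_n -> hom C a b),
    forall f : hom C a b, exists c : 'I_n -> k, f = \sum_(i < n) c i *: v i.

Definition sub_le (a x y : C) (m1 : hom C x a) (m2 : hom C y a) : Prop :=
  exists h : hom C x y, comp m2 h = m1.

Definition finite_length (a : C) : Prop :=
  ~ exists (S : nat -> C) (m : forall n, hom C (S n) a),
      (forall n, mono (m n)) /\
      (forall n, sub_le (m n.+1) (m n) /\ ~ sub_le (m n) (m n.+1)).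

Definition projective (P : C) : Prop :=
  forall (a b : C) (e : hom C a b), epi e ->
    forall g : hom C P b, exists h : hom C P a, comp e h = g.

Definition enough_projectives : Prop :=
  forall a : C, exists P (e : hom C P a), projective P /\ epi e.

Definition simple (S : C) : Prop :=
  ~ is_zero_obj S /\
  forall x (m : hom C x S), mono m -> is_zero_obj x \/ iso m.

Definition finitely_many_simples : Prop :=
  exists n (S : 'I_n -> C), forall X : C, simple X -> exists i, isomorphic X (S i).

Definition finite_linear_category : Prop :=
  [/\ linear_category, findim_homs, forall a : C, finite_length a,
      enough_projectives & finitely_many_simples].
End CatDefs.

Record LinFunctor (k : fieldType) (C D : LinCat k) := {
  fob :> C -> D;
  fhom : forall a b : C, hom C a b -> hom D (fob a) (fob b);
  fhom_id : forall a : C, fhom (idm a) = idm (fob a);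
  fhom_comp : forall (a b c : C) (g : hom C b c) (f : hom C a b),
      fhom (comp g f) = comp (fhom g) (fhom f);
  fhom_linear : forall (a b : C) (x : k) (f g : hom C a b),
      fhom (x *: f + g) = x *: fhom f + fhom g
}.
Arguments fhom {k C D} F {a b} f : rename.

Section FunctorDefs.
Variables (k : fieldType) (C D : LinCat k).

Definition faithful (U : LinFunctor D C) : Prop :=
  forall (a b : D) (f g : hom D a b), fhom U f = fhom U g -> f = g.

Definition exact_functor (U : LinFunctor D C) : Prop :=
  (forall (a b K : D) (f : hom D a b) (i : hom D K a),
      is_kernel f i -> is_kernel (fhom U f) (fhom U i)) /\
  (forall (a b Q : D) (f : hom D a b) (p : hom D b Q),
      is_cokernel f p -> is_cokernel (fhom U f) (fhom U p)).

Definition adjunction (F : LinFunctor C D) (U : LinFunctor D C) : Prop :=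
  exists (eta : forall c : C, hom C c (U (F c)))
         (eps : forall d : D, hom D (F (U d)) d),
  [/\ forall (c c' : C) (f : hom C c c'),
        comp (eta c') f = comp (fhom U (fhom F f)) (eta c),
      forall (d d' : D) (g : hom D d d'),
        comp g (eps d) = comp (eps d') (fhom F (fhom U g)),
      forall c : C, comp (eps (F c)) (fhom F (eta c)) = idm (F c)
    & forall d : D, comp (fhom U (eps d)) (eta (U d)) = idm (U d)].
End FunctorDefs.

From mathcomp Require Import all_boot all_algebra.
From Stdlib Require Import Classical ClassicalEpsilon.
Set Implicit Arguments. Unset Strict Implicit. Unset Printing Implicit Defensive.
Import GRing.Theory.
Local Open Scope ring_scope.

(* Since [U] is faithful and exact it embeds hom spaces of [D] into those of [C],
   preserves monos and reflects inclusions of subobjects, so hom spaces of [D] are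
   finite-dimensional and a strictly decreasing chain in [d] gives one in [U d].
   The left adjoint [F] preserves projectives and the counit is epi, so a projective
   cover [P -> U d] yields an epimorphism [F P -> d].
   A simple [T] of [D] contains no zero object, so [U T] contains a simple [X] of [C];
   precomposing with a projective cover [P -> X] and transposing gives a nonzero map
   [F P -> T].  Finally a projective [G] of finite length has only finitely many simple
   quotients up to isomorphism: for pairwise non-isomorphic nonzero [q_n : G -> S_n]
   the joint kernels of [q_0, ..., q_(n-1)] would decrease strictly, strictness coming
   from projectivity of [G] and Schur's lemma. *)

Section FinitelySpanned.
Variable k : fieldType.
Implicit Types V W : lmodType k.

Lemma linear_fun0 V W (f : V -> W) : linear f -> f 0 = 0.
Proof. by move=> lin_f; rewrite -[0 in LHS]subr0 (zmod_morphism_linear lin_f) subrr. Qed.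

Definition finitely_spanned V : Prop :=
  exists n (v : 'I_n -> V), forall x, exists c : 'I_n -> k, x = \sum_(i < n) c i *: v i.

Fixpoint in_span V (s : seq V) (x : V) : Prop :=
  if s is w :: s' then exists a, in_span s' (x - a *: w) else x = 0.

Lemma in_span0 V (s : seq V) : in_span s 0.
Proof. by elim: s => //= w s IH; exists 0; rewrite scale0r subr0. Qed.

Lemma in_span_lin V (s : seq V) c x y :
  in_span s x -> in_span s y -> in_span s (c *: x + y).
Proof.
elim: s x y => [|w s IH] x y /=; first by move=> -> ->; rewrite scaler0 addr0.
move=> [a Ha] [b Hb]; exists (c * a + b).
have -> : c *: x + y - (c * a + b) *: w = c *: (x - a *: w) + (y - b *: w).
  by rewrite scalerDl scalerBr scalerA opprD addrACA.
exact: IH.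
Qed.

Lemma in_span_mem V (s : seq V) x : x \in s -> in_span s x.
Proof.
elim: s => //= w s IH; rewrite inE => /predU1P [->|/IH Hx].
  by exists 1; rewrite scale1r subrr; apply: in_span0.
by exists 0; rewrite scale0r subr0.
Qed.

Lemma in_span_sum V (I : finType) (v : I -> V) (c : I -> k) :
  in_span [seq v i | i <- enum I] (\sum_i c i *: v i).
Proof.
apply: (big_ind (in_span _)); first exact: in_span0.
  by move=> x y Hx Hy; rewrite -[x]scale1r; apply: in_span_lin.
move=> i _; rewrite -[_ *: _]addr0; apply: in_span_lin; last exact: in_span0.
by apply/in_span_mem/map_f; rewrite mem_enum.
Qed.

Lemma in_span_coords V (s : seq V) x : in_span s x ->
  exists c : 'I_(size s) -> k, x = \sum_(i < size s) c i *: s`_i.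
Proof.
elim: s x => [|w s IH] x /=; first by move=> ->; exists (fun _ => 0); rewrite big_ord0.
move=> [a /IH [c Hc]]; exists (fun i => if unlift ord0 i is Some j then c j else a).
rewrite big_ord_recl /= unlift_none; under eq_bigr => i _ do rewrite liftK.
by rewrite -Hc addrC subrK.
Qed.

Lemma in_span_linear_inj V W (f : V -> W) (s : seq V) x :
  linear f -> injective f -> in_span [seq f y | y <- s] (f x) -> in_span s x.
Proof.
move=> lin_f inj_f; elim: s x => [|u s IH] x /=; first by rewrite -(linear_fun0 lin_f) => /inj_f.
move=> [a Ha]; exists a; apply: IH.
by rewrite (zmod_morphism_linear lin_f) -[a *: u]addr0 lin_f linear_fun0 // addr0.
Qed.

Lemma subspace_in_span V (P : V -> Prop) (s : seq V) :
  P 0 -> (forall c x y, P x -> P y -> P (c *: x + y)) ->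
  (forall x, P x -> in_span s x) ->
  exists t : seq V, (forall y, y \in t -> P y) /\ forall x, P x -> in_span t x.
Proof.
elim: s P => [|w s IH] P P0 Plin /= Ps.
  by exists [::]; split=> // x /Ps.
(* Either a vector of [P] has a nonzero [w]-coordinate modulo [span s] and
   replaces [w], or [P] already lies in [span s]. *)
have [[v0 [Pv0 [a0 [a0_neq0 Hv0]]]]|Hno] :=
  classic (exists v0, P v0 /\ exists a, a != 0 /\ in_span s (v0 - a *: w)).
  have [|||t [tP Pt]] := IH (fun x => P x /\ in_span s x).
  - by split=> //; apply: in_span0.
  - by move=> c x y [Px Sx] [Py Sy]; split; [apply: Plin | apply: in_span_lin].
  - by move=> x [].
  exists (v0 :: t); split=> [y|x Px /=].
    by rewrite inE => /predU1P [->|/tP []].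
  have [b Hb] := Ps x Px; exists (b / a0); apply: Pt; split.
    by rewrite addrC -scaleNr; apply: Plin.
  have -> : x - b / a0 *: v0 = - (b / a0) *: (v0 - a0 *: w) + (x - b *: w).
    rewrite scalerBr scalerA mulNr divfK // !scaleNr opprK.
    by rewrite addrC -addrA [_ *: w + _]addrC subrK.
  exact: in_span_lin.
apply: IH => // x Px; have [a Ha] := Ps x Px.
have [a0|a_neq0] := eqVneq a 0; first by move: Ha; rewrite a0 scale0r subr0.
by case: Hno; exists x; split=> //; exists a.
Qed.

Lemma finitely_spanned_linear_inj V W (f : V -> W) :
  linear f -> injective f -> finitely_spanned W -> finitely_spanned V.
Proof.
move=> lin_f inj_f [n [v Hv]].
pose P y := exists x, y = f x.
have [|||t [tP Pt]] := @subspace_in_span W P [seq v i | i <- enum 'I_n].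
- by exists 0; rewrite linear_fun0.
- by move=> c _ _ [x ->] [y ->]; exists (c *: x + y); rewrite lin_f.
- by move=> y _; have [c ->] := Hv y; apply: in_span_sum.
have /choice [pre preK] : forall y, exists x, P y -> y = f x.
  by move=> y; have [[x ->]|NPy] := classic (P y); [exists x | exists 0].
have span_pre x : in_span [seq pre y | y <- t] x.
  apply: (in_span_linear_inj lin_f inj_f).
  by rewrite -map_comp (map_id_in (fun y ty => esym (preK y (tP y ty)))); apply/Pt; exists x.
exists (size [seq pre y | y <- t]), (fun i => [seq pre y | y <- t]`_i) => x.
exact: in_span_coords.
Qed.

End FinitelySpanned.

Section Preadditive.
Variables (k : fieldType) (C : LinCat k).
Implicit Types a b c x y z : C.

Lemma comp0r a b c (g : hom C b c) : comp g (0 : hom C a b) = 0.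
Proof. exact: (linear_fun0 (comp_linear_r g)). Qed.

Lemma comp0l a b c (f : hom C a b) : comp (0 : hom C b c) f = 0.
Proof. exact: (linear_fun0 (comp_linear_l f)). Qed.

Lemma compBr a b c (g : hom C b c) (f1 f2 : hom C a b) :
  comp g (f1 - f2) = comp g f1 - comp g f2.
Proof. exact: (zmod_morphism_linear (comp_linear_r g)). Qed.

Lemma compBl a b c (f : hom C a b) (g1 g2 : hom C b c) :
  comp (g1 - g2) f = comp g1 f - comp g2 f.
Proof. exact: (zmod_morphism_linear (comp_linear_l f)). Qed.

Lemma hom_to_zero_obj z a : is_zero_obj z -> forall f : hom C a z, f = 0.
Proof. by move=> z0 f; rewrite -[f]comp_id_l z0 comp0l. Qed.

Lemma hom_from_zero_obj z a : is_zero_obj z -> forall f : hom C z a, f = 0.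
Proof. by move=> z0 f; rewrite -[f]comp_id_r z0 comp0r. Qed.

Lemma mono_id a : mono (idm a).
Proof. by move=> x u v; rewrite !comp_id_l. Qed.

Lemma mono_comp a b c (g : hom C b c) (f : hom C a b) :
  mono g -> mono f -> mono (comp g f).
Proof. by move=> g_mono f_mono x u v; rewrite -!comp_assoc => /g_mono /f_mono. Qed.

Lemma epi_comp a b c (g : hom C b c) (f : hom C a b) :
  epi g -> epi f -> epi (comp g f).
Proof. by move=> g_epi f_epi x u v; rewrite !comp_assoc => /f_epi /g_epi. Qed.

Lemma mono_comp_eq0 a b (m : hom C a b) x (g : hom C x a) :
  mono m -> comp m g = 0 -> g = 0.
Proof. by move=> m_mono mg0; apply: m_mono; rewrite mg0 comp0r. Qed.

Lemma epi_comp_eq0 a b (e : hom C a b) x (g : hom C b x) :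
  epi e -> comp g e = 0 -> g = 0.
Proof. by move=> e_epi ge0; apply: e_epi; rewrite ge0 comp0l. Qed.

Lemma kernel_mono a b K (f : hom C a b) (i : hom C K a) : is_kernel f i -> mono i.
Proof.
move=> [fi0 univ] x g h gh.
have [u [_ uniq_u]] := univ x (comp i g) ltac:(by rewrite comp_assoc fi0 comp0l).
by rewrite (uniq_u g erefl) (uniq_u h (esym gh)).
Qed.

Lemma cokernel_epi a b Q (f : hom C a b) (p : hom C b Q) : is_cokernel f p -> epi p.
Proof.
move=> [pf0 univ] x g h gh.
have [u [_ uniq_u]] := univ x (comp g p) ltac:(by rewrite -comp_assoc pf0 comp0r).
by rewrite (uniq_u g erefl) (uniq_u h (esym gh)).
Qed.

Lemma mono_kernel_zero a b K (m : hom C a b) (i : hom C K a) :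
  mono m -> is_kernel m i -> is_zero_obj K.
Proof.
move=> m_mono ker_i; have [mi0 _] := ker_i.
have i0 : i = 0 by apply: (mono_comp_eq0 m_mono).
by apply: (mono_comp_eq0 (kernel_mono ker_i)); rewrite comp_id_r.
Qed.

Lemma epi_cokernel_zero a b Q (e : hom C a b) (p : hom C b Q) :
  epi e -> is_cokernel e p -> is_zero_obj Q.
Proof.
move=> e_epi coker_p; have [pe0 _] := coker_p.
have p0 : p = 0 by apply: (epi_comp_eq0 e_epi).
by apply: (epi_comp_eq0 (cokernel_epi coker_p)); rewrite comp_id_l.
Qed.

Lemma zero_kernel_mono a b K (m : hom C a b) (i : hom C K a) :
  is_zero_obj K -> is_kernel m i -> mono m.
Proof.
move=> K0 [_ univ] x g h mg_mh.
have [u [iu _]] := univ x (g - h) ltac:(by rewrite compBr mg_mh subrr).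
by apply/eqP; rewrite -subr_eq0 -iu (hom_to_zero_obj K0 u) comp0r.
Qed.

Lemma zero_cokernel_epi a b Q (e : hom C a b) (p : hom C b Q) :
  is_zero_obj Q -> is_cokernel e p -> epi e.
Proof.
move=> Q0 [_ univ] x g h ge_he.
have [u [up _]] := univ x (g - h) ltac:(by rewrite compBl ge_he subrr).
by apply/eqP; rewrite -subr_eq0 -up (hom_from_zero_obj Q0 u) comp0l.
Qed.

Lemma isomorphic_sym a b : isomorphic a b -> isomorphic b a.
Proof. by case=> f [g [gf fg]]; exists g, f. Qed.

End Preadditive.

Section SimpleSubobject.
Variables (k : fieldType) (C : LinCat k).

Lemma nonsimple_proper_subobject (x : C) : ~ is_zero_obj x -> ~ simple x ->
  exists y (m : hom C y x), [/\ mono m, ~ is_zero_obj y & ~ iso m].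
Proof.
move=> x_neq0 x_nsimple; apply: NNPP => Hno; apply: x_nsimple; split=> // y m m_mono.
have [|y_neq0] := classic (is_zero_obj y); first by left.
by right; apply: NNPP => m_niso; apply: Hno; exists y, m.
Qed.

Lemma finite_length_simple_subobject (y : C) : finite_length y -> ~ is_zero_obj y ->
  exists x (j : hom C x y), mono j /\ simple x.
Proof.
move=> y_fin y_neq0; apply: NNPP => Hno.
pose sub := {x : C & {m : hom C x y | mono m /\ ~ is_zero_obj x}}.
pose incl (s : sub) := proj1_sig (projT2 s).
have /choice [next nextP] : forall s : sub,
    exists s', sub_le (incl s') (incl s) /\ ~ sub_le (incl s) (incl s').
  case=> x [m [m_mono x_neq0]].
  have [|x' [m' [m'_mono x'_neq0 m'_niso]]] := nonsimple_proper_subobject x_neq0.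
    by move=> x_simple; apply: Hno; exists x, m.
  exists (existT _ x' (exist _ (comp m m') (conj (mono_comp m_mono m'_mono) x'_neq0))).
  split=> [|[h mm'h]]; first by exists m'.
  have m'h : comp m' h = idm x by apply: (m_mono); rewrite comp_assoc mm'h comp_id_r.
  apply: m'_niso; exists h; split=> //.
  by apply: (m'_mono); rewrite comp_assoc m'h comp_id_l comp_id_r.
pose chain n := iter n next (existT _ y (exist _ (idm y) (conj (@mono_id _ C y) y_neq0))).
apply: y_fin; exists (fun n => projT1 (chain n)), (fun n => incl (chain n)); split.
  by move=> n; case: (chain n) => x [m []].
by move=> n; apply: nextP.
Qed.

End SimpleSubobject.

Section IsoClasses.
Variables (k : fieldType) (C : LinCat k).
Implicit Types P Q : C -> Prop.

Definition finitely_many_iso_classes P : Prop :=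
  exists n (R : 'I_n -> C), forall X, P X -> exists i, isomorphic X (R i).

Lemma finitely_many_iso_classes_sub P Q :
  (forall X, P X -> Q X) -> finitely_many_iso_classes Q -> finitely_many_iso_classes P.
Proof. by move=> PQ [n [R HR]]; exists n, R => X /PQ /HR. Qed.

Lemma finitely_many_iso_classesU P Q :
  finitely_many_iso_classes P -> finitely_many_iso_classes Q ->
  finitely_many_iso_classes (fun X => P X \/ Q X).
Proof.
move=> [n1 [R1 HR1]] [n2 [R2 HR2]].
exists (n1 + n2)%N, (fun i => match split i with inl i1 => R1 i1 | inr i2 => R2 i2 end).
move=> X [/HR1 [i Hi]|/HR2 [i Hi]].
  by exists (lshift n2 i); rewrite (unsplitK (inl i)).
by exists (rshift n1 i); rewrite (unsplitK (inr i)).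
Qed.

Lemma finitely_many_iso_classes_bigcup (I : finType) (P : I -> C -> Prop) :
  (forall i, finitely_many_iso_classes (P i)) ->
  finitely_many_iso_classes (fun X => exists i, P i X).
Proof.
move=> finP; suff /(_ (enum I)) : forall s : seq I,
    finitely_many_iso_classes (fun X => exists2 i, i \in s & P i X).
  by apply: finitely_many_iso_classes_sub => X [i PiX]; exists i; rewrite ?mem_enum.
elim=> [|i s IH]; first by exists 0%N, (ffun0 (card_ord 0)) => X [].
apply: finitely_many_iso_classes_sub (finitely_many_iso_classesU (finP i) IH).
by move=> X [j]; rewrite inE => /predU1P [->|js] PjX; [left | right; exists j].
Qed.

Lemma infinitely_many_iso_classes (x0 : C) P : ~ finitely_many_iso_classes P ->
  exists S : nat -> C, (forall n, P (S n)) /\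
    forall i j, (j < i)%N -> ~ isomorphic (S i) (S j).
Proof.
move=> P_inf.
have /choice [pick pickP] : forall s : seq C,
    exists X, P X /\ forall j, (j < size s)%N -> ~ isomorphic X (nth x0 s j).
  move=> s; apply: NNPP => Hno; apply: P_inf.
  exists (size s), (fun i => nth x0 s i) => X PX; apply: NNPP => Hni.
  by apply: Hno; exists X; split=> // j lt_j X_iso; apply: Hni; exists (Ordinal lt_j).
pose fix prefix n := if n is n'.+1 then rcons (prefix n') (pick (prefix n')) else [::].
have size_prefix n : size (prefix n) = n by elim: n => //= n; rewrite size_rcons => ->.
have nth_prefix n j : (j < n)%N -> nth x0 (prefix n) j = pick (prefix j).
  elim: n => // n IH; rewrite ltnS leq_eqVlt /= nth_rcons size_prefix.
  by case/predU1P=> [->|lt_jn]; rewrite ?ltnn ?eqxx // lt_jn IH.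
exists (fun n => pick (prefix n)); split=> [n|i j lt_ji]; first by case: (pickP (prefix n)).
by rewrite -(nth_prefix i j lt_ji); case: (pickP (prefix i)) => _; apply; rewrite size_prefix.
Qed.

End IsoClasses.

Section Abelian.
Variables (k : fieldType) (C : LinCat k).
Hypothesis C_abelian : is_abelian C.

Lemma kernel_exists (a b : C) (f : hom C a b) : exists K (i : hom C K a), is_kernel f i.
Proof. by case: C_abelian => [_ [_ [ker _]]]; apply: ker. Qed.

Lemma cokernel_exists (a b : C) (f : hom C a b) : exists Q (p : hom C b Q), is_cokernel f p.
Proof. by case: C_abelian => [_ [_ [_ [coker _]]]]; apply: coker. Qed.

Lemma mono_is_kernel (a b : C) (m : hom C a b) : mono m ->
  exists c (f : hom C b c), is_kernel f m.
Proof. by case: C_abelian => [_ [_ [_ [_ [mono_ker _]]]]]; apply: mono_ker. Qed.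

Lemma epi_is_cokernel (a b : C) (e : hom C a b) : epi e ->
  exists c (f : hom C c a), is_cokernel f e.
Proof. by case: C_abelian => [_ [_ [_ [_ [_ epi_coker]]]]]; apply: epi_coker. Qed.

Lemma mono_epi_iso (a b : C) (m : hom C a b) : mono m -> epi m -> iso m.
Proof.
move=> m_mono m_epi; have [c [f [fm0 univ]]] := mono_is_kernel m_mono.
have f0 : f = 0 by apply: (epi_comp_eq0 m_epi).
have [h [mh _]] := univ b (idm b) ltac:(by rewrite f0 comp0l).
exists h; split=> //.
by apply: m_mono; rewrite comp_assoc mh comp_id_l comp_id_r.
Qed.

Lemma nonzero_to_simple_epi (a T : C) (f : hom C a T) : simple T -> f <> 0 -> epi f.
Proof.
move=> [_ T_simple] f_neq0.
have [Q [p coker_p]] := cokernel_exists f; have [pf0 _] := coker_p.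
have [K [i ker_i]] := kernel_exists p; have [pi0 univ] := ker_i.
have [h [ih _]] := univ a f pf0.
have [K0 | [j [_ ij]]] := T_simple K i (kernel_mono ker_i).
  by case: f_neq0; rewrite -ih (hom_to_zero_obj K0 h) comp0r.
have p0 : p = 0 by rewrite -[p]comp_id_r -ij comp_assoc pi0 comp0l.
apply: (zero_cokernel_epi _ coker_p).
by apply: (epi_comp_eq0 (cokernel_epi coker_p)); rewrite comp_id_l.
Qed.

Lemma schur_iso (S T : C) (g : hom C S T) : simple S -> simple T -> g <> 0 -> iso g.
Proof.
move=> [_ S_simple] T_simple g_neq0.
apply: mono_epi_iso; last exact: nonzero_to_simple_epi.
have [K [i ker_i]] := kernel_exists g.
have [K0 | [j [_ ij]]] := S_simple K i (kernel_mono ker_i).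
  exact: zero_kernel_mono K0 ker_i.
by case: g_neq0; case: ker_i => gi0 _; rewrite -[g]comp_id_r -ij comp_assoc gi0 comp0l.
Qed.

Lemma epi_kernel_factor (a S L x : C) (e : hom C a S) (i : hom C L a) (g : hom C a x) :
  epi e -> is_kernel e i -> comp g i = 0 -> exists h : hom C S x, comp h e = g.
Proof.
move=> e_epi [ei0 univ_i] gi0.
have [c [f [ef0 univ_e]]] := epi_is_cokernel e_epi.
have [u [iu _]] := univ_i c f ef0.
have [h [he _]] := univ_e x g ltac:(by rewrite -iu comp_assoc gi0 comp0l).
by exists h.
Qed.

End Abelian.

Section SimpleQuotientsOfProjective.
Variables (k : fieldType) (C : LinCat k).
Hypothesis C_abelian : is_abelian C.
Variables (G : C) (G_proj : projective G).

(* The kernel of [phi] is not killed by [psi], since otherwise [psi] would factor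
   through [S] and Schur's lemma would make [S] and [T] isomorphic; projectivity
   of [G] then lifts [psi] along [psi] restricted to that kernel. *)
Lemma projective_separate_quotients (S T : C) (phi : hom C G S) (psi : hom C G T) :
  simple S -> simple T -> phi <> 0 -> psi <> 0 -> ~ isomorphic S T ->
  exists x : hom C G G, comp phi x = 0 /\ comp psi x = psi.
Proof.
move=> S_simple T_simple phi_neq0 psi_neq0 S_niso_T.
have [L [i ker_i]] := kernel_exists C_abelian phi.
have [psii0|psii_neq0] := classic (comp psi i = 0).
  have phi_epi := nonzero_to_simple_epi C_abelian S_simple phi_neq0.
  have [g gphi] := epi_kernel_factor C_abelian phi_epi ker_i psii0.
  case: S_niso_T; exists g; apply: schur_iso => // g0.
  by apply: psi_neq0; rewrite -gphi g0 comp0l.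
have [h ih] := G_proj (nonzero_to_simple_epi C_abelian T_simple psii_neq0) psi.
exists (comp i h); split; last by rewrite comp_assoc.
by case: ker_i => phii0 _; rewrite comp_assoc phii0 comp0l.
Qed.

Variables (S : nat -> C) (q : forall n, hom C G (S n)).
Hypotheses (S_simple : forall n, simple (S n)) (q_neq0 : forall n, q n <> 0).

Lemma projective_separating_endo t n :
  (forall j, (j < n)%N -> ~ isomorphic (S j) (S t)) ->
  exists e : hom C G G, (forall j, (j < n)%N -> comp (q j) e = 0) /\ comp (q t) e <> 0.
Proof.
elim: n => [|n IH] S_niso.
  by exists (idm G); split=> //; rewrite comp_id_r.
have [e [qe0 qte_neq0]] := IH (fun j lt_jn => S_niso j (ltnW lt_jn)).
have [qne0|qne_neq0] := classic (comp (q n) e = 0).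
  by exists e; split=> // j; rewrite ltnS leq_eqVlt => /predU1P [->|/qe0].
have [x [qnex0 qtex]] := projective_separate_quotients (S_simple n) (S_simple t)
  qne_neq0 qte_neq0 (S_niso n (ltnSn n)).
exists (comp e x); split=> [j|]; last by rewrite comp_assoc qtex.
rewrite ltnS leq_eqVlt comp_assoc => /predU1P [->|/qe0 ->] //.
by rewrite comp0l.
Qed.

Lemma joint_kernel_exists n : exists K (m : hom C K G), mono m /\
  forall x (y : hom C x G), sub_le y m <-> forall j, (j < n)%N -> comp (q j) y = 0.
Proof.
elim: n => [|n [K [m [m_mono m_ker]]]].
  by exists G, (idm G); split=> [|x y]; [apply: mono_id | split=> // _; exists y; rewrite comp_id_l].
have [K' [i [qmi0 univ]]] := kernel_exists C_abelian (comp (q n) m).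
exists K', (comp m i); split=> [|x y].
  by apply: mono_comp m_mono (kernel_mono (conj qmi0 univ)).
split=> [[h <-] j|qy0].
  rewrite ltnS leq_eqVlt => /predU1P [->|lt_jn]; first by rewrite !comp_assoc qmi0 comp0l.
  by rewrite -comp_assoc; apply: (m_ker x _).1 => //; exists (comp i h).
have [h mh] := (m_ker x y).2 (fun j lt_jn => qy0 j (ltnW lt_jn)).
have [u [iu _]] := univ x h ltac:(by rewrite -comp_assoc mh qy0).
by exists u; rewrite -comp_assoc iu.
Qed.

Hypothesis S_pairwise_niso : forall i j, (j < i)%N -> ~ isomorphic (S i) (S j).

(* The joint kernels of [q 0, ..., q (n-1)] strictly decrease. *)
Lemma projective_not_finite_length : ~ finite_length G.
Proof.
move=> G_fin; apply: G_fin.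
have /choice [K K_ker] := joint_kernel_exists.
pose m n := proj1_sig (constructive_indefinite_description _ (K_ker n)).
have mP n : mono (m n) /\ forall x (y : hom C x G),
    sub_le y (m n) <-> forall j, (j < n)%N -> comp (q j) y = 0.
  exact: proj2_sig (constructive_indefinite_description _ (K_ker n)).
exists K, m; split=> [n|n]; first by case: (mP n).
have qm0 j : (j < n)%N -> comp (q j) (m n.+1) = 0.
  have m_le : sub_le (m n.+1) (m n.+1) by exists (idm _); rewrite comp_id_r.
  by move=> lt_jn; apply: ((mP n.+1).2 _ _).1 m_le j (ltnW lt_jn).
split=> [|mn_le]; first exact: ((mP n).2 _ _).2 qm0.
have [e [qe0 qne_neq0]] := @projective_separating_endo n n
  (fun j lt_jn Siso => S_pairwise_niso lt_jn (isomorphic_sym Siso)).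
have [h mh] := ((mP n).2 _ e).2 qe0.
apply: qne_neq0; rewrite -mh comp_assoc.
by rewrite (((mP n.+1).2 _ (m n)).1 mn_le n (ltnSn n)) comp0l.
Qed.
End SimpleQuotientsOfProjective.

Lemma projective_finitely_many_simple_quotients (k : fieldType) (C : LinCat k) (G : C) :
  is_abelian C -> projective G -> finite_length G ->
  finitely_many_iso_classes (fun T => simple T /\ exists q : hom C G T, q <> 0).
Proof.
move=> C_abelian G_proj G_fin; apply: NNPP => quot_inf.
have [S [S_quot S_niso]] := infinitely_many_iso_classes G quot_inf.
pose q n := proj1_sig (constructive_indefinite_description _ (S_quot n).2).
have q_neq0 n : q n <> 0 := proj2_sig (constructive_indefinite_description _ (S_quot n).2).
exact: (projective_not_finite_length C_abelian G_proj (fun n => (S_quot n).1) q_neq0 S_niso).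
Qed.

Section Functor.
Variables (k : fieldType) (C D : LinCat k) (F : LinFunctor C D).

Lemma fhom0 (a b : C) : fhom F (0 : hom C a b) = 0.
Proof. exact: (linear_fun0 (fhom_linear F (a:=a) (b:=b))). Qed.

Lemma functor_zero_obj (z : C) : is_zero_obj z -> is_zero_obj (F z).
Proof. by rewrite /is_zero_obj -fhom_id => ->; rewrite fhom0. Qed.

End Functor.

Section ExactFaithful.
Variables (k : fieldType) (C D : LinCat k) (U : LinFunctor D C).
Hypotheses (D_abelian : is_abelian D) (U_exact : exact_functor U) (U_faithful : faithful U).

Lemma faithful_findim_homs : findim_homs C -> findim_homs D.
Proof.
move=> C_findim a b; apply: (@finitely_spanned_linear_inj _ _ _ (fhom U)) (C_findim _ _).
  exact: fhom_linear.
exact: U_faithful.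
Qed.

Lemma faithful_zero_obj (d : D) : is_zero_obj (U d) -> is_zero_obj d.
Proof. by move=> Ud0; apply: U_faithful; rewrite fhom0 fhom_id. Qed.

Lemma exact_mono (a b : D) (m : hom D a b) : mono m -> mono (fhom U m).
Proof.
move=> m_mono; have [K [i ker_i]] := kernel_exists D_abelian m.
apply: (zero_kernel_mono (i := fhom U i)); last exact: U_exact.1.
exact/functor_zero_obj/(mono_kernel_zero m_mono ker_i).
Qed.

Lemma exact_epi (a b : D) (e : hom D a b) : epi e -> epi (fhom U e).
Proof.
move=> e_epi; have [Q [p coker_p]] := cokernel_exists D_abelian e.
apply: (zero_cokernel_epi (p := fhom U p)); last exact: U_exact.2.
exact/functor_zero_obj/(epi_cokernel_zero e_epi coker_p).
Qed.

Lemma faithful_reflect_sub_le (a x y : D) (m1 : hom D x a) (m2 : hom D y a) :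
  mono m2 -> sub_le (fhom U m1) (fhom U m2) -> sub_le m1 m2.
Proof.
move=> m2_mono [h m2h]; have [c [f [fm2 univ]]] := mono_is_kernel D_abelian m2_mono.
suff /univ [u [m2u _]] : comp f m1 = 0 by exists u.
by apply: U_faithful; rewrite fhom0 fhom_comp -m2h comp_assoc -fhom_comp fm2 fhom0 comp0l.
Qed.

Lemma exact_faithful_finite_length (d : D) : finite_length (U d) -> finite_length d.
Proof.
move=> Ud_fin [S [m [m_mono m_strict]]]; apply: Ud_fin.
exists (fun n => U (S n)), (fun n => fhom U (m n)); split=> [n|n].
  exact: exact_mono.
have [[h mh] m_nle] := m_strict n; split; first by exists (fhom U h); rewrite -fhom_comp mh.
by move/(faithful_reflect_sub_le (m_mono n.+1)).
Qed.

End ExactFaithful.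

Section Adjunction.
Variables (k : fieldType) (C D : LinCat k) (F : LinFunctor C D) (U : LinFunctor D C).
Variables (eta : forall c : C, hom C c (U (F c))) (eps : forall d : D, hom D (F (U d)) d).
Hypotheses
  (eta_nat : forall (c c' : C) (f : hom C c c'),
     comp (eta c') f = comp (fhom U (fhom F f)) (eta c))
  (eps_nat : forall (d d' : D) (g : hom D d d'),
     comp g (eps d) = comp (eps d') (fhom F (fhom U g)))
  (triangleF : forall c : C, comp (eps (F c)) (fhom F (eta c)) = idm (F c))
  (triangleU : forall d : D, comp (fhom U (eps d)) (eta (U d)) = idm (U d)).

Definition adjR (c : C) (d : D) (g : hom D (F c) d) : hom C c (U d) :=
  comp (fhom U g) (eta c).
Definition adjL (c : C) (d : D) (f : hom C c (U d)) : hom D (F c) d :=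
  comp (eps d) (fhom F f).

Lemma adjRK (c : C) (d : D) (g : hom D (F c) d) : adjL (adjR g) = g.
Proof.
by rewrite /adjL /adjR fhom_comp comp_assoc -eps_nat -comp_assoc triangleF comp_id_r.
Qed.

Lemma adjLK (c : C) (d : D) (f : hom C c (U d)) : adjR (adjL f) = f.
Proof.
by rewrite /adjL /adjR fhom_comp -comp_assoc -eta_nat comp_assoc triangleU comp_id_l.
Qed.

Lemma adjR_compF (c c' : C) (d : D) (e : hom C c c') (g : hom D (F c') d) :
  adjR (comp g (fhom F e)) = comp (adjR g) e.
Proof. by rewrite /adjR fhom_comp -!comp_assoc eta_nat. Qed.

Lemma adjL_neq0 (c : C) (d : D) (f : hom C c (U d)) : f <> 0 -> adjL f <> 0.
Proof. by move=> f_neq0 Lf0; apply: f_neq0; rewrite -[f]adjLK Lf0 /adjR fhom0 comp0l. Qed.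

Lemma left_adjoint_epi (c c' : C) (e : hom C c c') : epi e -> epi (fhom F e).
Proof.
move=> e_epi x g h ge_he; rewrite -(adjRK g) -(adjRK h); congr adjL.
by apply: e_epi; rewrite -!adjR_compF ge_he.
Qed.

Lemma left_adjoint_projective (P : C) :
  (forall (a b : D) (e : hom D a b), epi e -> epi (fhom U e)) ->
  projective P -> projective (F P).
Proof.
move=> U_epi P_proj a b e e_epi g.
have [h eh] := P_proj _ _ _ (U_epi _ _ _ e_epi) (adjR g).
exists (adjL h).
by rewrite /adjL comp_assoc eps_nat -comp_assoc -fhom_comp eh; apply: adjRK.
Qed.

Hypothesis U_faithful : faithful U.

(* By the triangle identity, [fhom U (eps d)] is split epi. *)
Lemma counit_epi (d : D) : epi (eps d).
Proof.
move=> x g h geps_heps; apply: U_faithful.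
by rewrite -[fhom U g]comp_id_r -[fhom U h]comp_id_r -(triangleU d) !comp_assoc
  -!fhom_comp geps_heps.
Qed.

Lemma adjoint_enough_projectives :
  (forall (a b : D) (e : hom D a b), epi e -> epi (fhom U e)) ->
  enough_projectives C -> enough_projectives D.
Proof.
move=> U_epi C_proj d; have [P [e [P_proj e_epi]]] := C_proj (U d).
exists (F P), (adjL e); split; first exact: left_adjoint_projective.
exact/epi_comp/left_adjoint_epi/e_epi/counit_epi.
Qed.

Hypotheses (D_abelian : is_abelian D) (U_exact : exact_functor U).

Lemma adjoint_finitely_many_simples :
  (forall c : C, finite_length c) -> enough_projectives C ->
  finitely_many_simples C -> finitely_many_simples D.
Proof.
move=> C_fin C_proj [m [X X_simple]].
pose Q i T := simple T /\ exists f : hom C (X i) (U T), f <> 0.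
apply: finitely_many_iso_classes_sub (finitely_many_iso_classes_bigcup (P := Q) _).
  move=> T T_simple.
  have UT_neq0 : ~ is_zero_obj (U T) by move/(faithful_zero_obj U_faithful); case: T_simple.
  have [Y [j [j_mono Y_simple]]] := finite_length_simple_subobject (C_fin _) UT_neq0.
  have [i [f [g [gf _]]]] := X_simple Y Y_simple.
  exists i; split=> //; exists (comp j g) => /(mono_comp_eq0 j_mono) g0.
  by case: Y_simple => + _; rewrite /is_zero_obj -gf g0 comp0l.
move=> i; have [P [e [P_proj e_epi]]] := C_proj (X i).
have FP_proj := left_adjoint_projective (exact_epi D_abelian U_exact) P_proj.
have FP_fin := exact_faithful_finite_length D_abelian U_exact U_faithful (C_fin (U (F P))).
apply: finitely_many_iso_classes_sub
  (projective_finitely_many_simple_quotients D_abelian FP_proj FP_fin).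
move=> T [T_simple [f f_neq0]]; split=> //; exists (adjL (comp f e)).
by apply: adjL_neq0 => /(epi_comp_eq0 e_epi).
Qed.

End Adjunction.

Theorem lemma1p6 (k : fieldType) (C D : LinCat k)
    (F : LinFunctor C D) (U : LinFunctor D C) :
  linear_category C -> linear_category D ->
  adjunction F U -> exact_functor U -> faithful U ->
  finite_linear_category C -> finite_linear_category D.
Proof.
move=> _ D_abelian [eta [eps [eta_nat eps_nat triangleF triangleU]]] U_exact U_faithful.
case=> _ C_findim C_fin C_proj C_simples; split=> //.
- exact: faithful_findim_homs U_faithful C_findim.
- by move=> d; apply/(exact_faithful_finite_length D_abelian U_exact U_faithful)/C_fin.
- exact: adjoint_enough_projectives eps_nat triangleF triangleU U_faithful
    (exact_epi D_abelian U_exact) C_proj.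
- exact: adjoint_finitely_many_simples eta_nat eps_nat triangleF triangleU
    U_faithful D_abelian U_exact C_fin C_proj C_simples.
Qed.
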